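(* Let $N\ge 1$ and let $L=\sum_{i=0}^N a_i(x)\partial_x^i$, where each $a_i$ is a complex polynomial with $\deg a_i\le i$, written $a_i(x)=\sum_{j=0}^i a_{i,j}x^j$, with $a_0\equiv 0$ and with the convention $a_i\equiv 0$ (all $a_{i,j}=0$) for $i>N$. For $n\ge 0$ and $0\le k\le n$ put $$\delta_n^{(k)}=\sum_{i=k}^{n}\binom{n}{i}\, i!\, a_{i,i-k}.$$ 1. For every $n\ge 0$, every $\lambda_n\in\mathbb{C}$ and every monic polynomial $P_n(x)=\sum_{i=0}^n b_{n,i}x^i$ of degree $n$ ($b_{n,n}=1$, and $b_{n,s}=0$ for $s>n$), the identity $\sum_{i=1}^N a_i(x)\partial_x^iP_n(x)=\lambda_nP_n(x)$ holds if and only if $$\sum_{k=0}^N\delta_{m+k}^{(k)}\, b_{n,m+k}=\lambda_n b_{n,m},\qquad m=0,1,\ldots,n.$$ 2. Suppose that there are complex numbers $\lambda_n$ ($n\ge 0$, $\lambda_0=0$) and monic polynomials $P_n$ of degree $n$ with $\sum_{i=1}^N a_i\partial_x^iP_n=\lambda_nP_n$ for all $n\ge0$. Let $M$ be the semi-infinite upper triangular matrix with entries (rows and columns indexed from $0$) $M_{r,c}=\delta_c^{(c-r)}$ if $0\le c-r\le N$ and $M_{r,c}=0$ otherwise, and let $M_{n+1}$ be its truncation to the first $n+1$ rows and columns. Assume $\lambda_n\notin\{0,\lambda_1,\ldots,\lambda_{n-1}\}$ for all $n=1,2,\ldots$. Then for each $n\ge1$, $P_n$ is the unique monic polynomial (of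 degree $n$) satisfying $\sum_{i=1}^N a_i\partial_x^iP_n=\lambda_nP_n$, and its coefficient vector $b_n=(b_{n,0},\ldots,b_{n,n-1},1)^T$ is an eigenvector of $M_{n+1}$ for the eigenvalue $\lambda_n$, i.e. $(M_{n+1}-\lambda_nI_{n+1})b_n=0$.
   Context: $\partial_x^i$ denotes the $i$-th derivative with respect to $x$. The normalization $a_0\equiv0$, $\lambda_0=0$ is a standing convention of the paper. *)

(* Complex numbers: R[i] = complex R for an arbitrary
   realType R (every realType is a complete Archimedean ordered field,
   i.e. a copy of the reals, so R[i] is a copy of C). *)
From HB Require Import structures.
From mathcomp Require Import all_boot all_order all_algebra.
From mathcomp Require Import reals complex.
Set Implicit Arguments. Unset Strict Implicit. Unset Printing Implicit Defensive.
Import Order.TTheory GRing.Theory Num.Theory.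
Local Open Scope ring_scope.

Definition Lop (C : nzRingType) (N : nat) (a : nat -> {poly C}) (P : {poly C})
  : {poly C} :=
  \sum_(1 <= i < N.+1) a i * P^`(i).

Definition delta (C : nzRingType) (a : nat -> {poly C}) (n k : nat) : C :=
  \sum_(k <= i < n.+1) ('C(n, i) * i`!)%:R * (a i)`_(i - k).

Definition Mtrunc (C : nzRingType) (N : nat) (a : nat -> {poly C}) (n : nat)
  : 'M[C]_(n.+1) :=
  \matrix_(r < n.+1, c < n.+1)
     (if (r <= c)%N && (c - r <= N)%N then delta a c (c - r) else 0).

Definition coefvec (C : nzRingType) (n : nat) (P : {poly C}) : 'cV[C]_(n.+1) :=
  \col_(i < n.+1) P`_i.

From HB Require Import structures.
From mathcomp Require Import all_boot all_order all_algebra.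
From mathcomp Require Import reals complex.
From mathcomp Require Import zify ring.
Import Order.TTheory GRing.Theory Num.Theory.
Set Implicit Arguments.
Unset Strict Implicit.
Unset Printing Implicit Defensive.
Local Open Scope ring_scope.

(* Since deg a_i <= i, comparing coefficients of x^m in L P gives
   (L P)_m = sum_k delta_(m+k)^(k) b_(m+k), which is both the system of
   Part 1 and the m-th entry of M_(n+1) b; in particular L is upper triangular
   with diagonal delta_n^(0), so delta_d^(0) is the eigenvalue of every
   eigenpolynomial of degree d.  The difference of two monic eigenpolynomials
   of degree n for lambda_n is an eigenpolynomial of some degree d < n, which
   would force lambda_n = lambda_d (or 0 = delta_0^(0) when d = 0). *)

Lemma sum_nat_widen0 (V : nmodType) (m n1 n2 : nat) (F : nat -> V) :
  (m <= n1 <= n2)%N -> (forall i, (n1 <= i < n2)%N -> F i = 0) ->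
  \sum_(m <= i < n2) F i = \sum_(m <= i < n1) F i.
Proof.
move=> /andP[mn1 n12] F0; rewrite (big_cat_nat mn1 n12) /=.
rewrite -[RHS]addr0; congr (_ + _).
by rewrite big_nat_cond big1 // => i /andP[/F0].
Qed.

Lemma size_monicB (C : nzRingType) (P Q : {poly C}) :
  P \is monic -> Q \is monic -> size P = size Q -> (size (P - Q)%R < size P)%N.
Proof.
move=> Pm Qm szPQ; have szP_gt0 : (0 < size P)%N by rewrite size_poly_gt0 monic_neq0.
rewrite -(prednK szP_gt0) ltnS; apply/leq_sizeP => j; rewrite coefB.
rewrite leq_eqVlt => /predU1P[<- | ltPj].
  by rewrite -lead_coefE szPQ -lead_coefE !(monicP _) ?subrr.
by rewrite !nth_default ?subrr -?szPQ // -(prednK szP_gt0).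
Qed.

Section LopCoefficients.

Variables (C : comNzRingType) (N : nat) (a : nat -> {poly C}).
Hypothesis size_a : forall i, (size (a i) <= i.+1)%N.
Hypothesis a0 : a 0%N = 0.
Hypothesis a_gtN : forall i, (N < i)%N -> a i = 0.

Lemma coef_mul_derivn (A P : {poly C}) (i m : nat) : (size A <= i.+1)%N ->
  (A * P^`(i))`_m =
  \sum_(0 <= k < i.+1) ('C(m + k, i) * i`!)%:R * A`_(i - k) * P`_(m + k).
Proof.
move=> szA.
have {1}-> : A = \sum_(j < i.+1) A`_j *: 'X^j.
  rewrite -poly_def; apply/polyP => j; rewrite coef_poly.
  by case: ltnP => // /(leq_trans szA) /leq_sizeP ->.
rewrite mulr_suml coef_sum big_nat_rev big_mkord /=.
apply: eq_bigr => -[j ltji] _ /=; rewrite add0n subSS.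
have -> : (i - (i - j) = j)%N by lia.
rewrite -scalerAl coefZ coefXnM coef_derivn.
case: ltnP => [ltmj | lejm].
  by rewrite bin_small ?mul0n ?mul0r ?mulr0 //; lia.
have -> : (i + (m - j) = m + (i - j))%N by lia.
by rewrite -bin_ffact mulrnAr -mulr_natl; ring.
Qed.

Lemma delta_eq0 (n k : nat) : (N < k)%N -> delta a n k = 0.
Proof.
move=> ltNk; rewrite /delta big_nat_cond big1 // => i /andP[/andP[leki _] _].
by rewrite a_gtN ?coef0 ?mulr0 //; exact: leq_trans ltNk leki.
Qed.

Lemma coef_Lop (P : {poly C}) (m : nat) :
  (Lop N a P)`_m = \sum_(0 <= k < N.+1) delta a (m + k) k * P`_(m + k).
Proof.
pose T i k := ('C(m + k, i) * i`!)%:R * (a i)`_(i - k) * P`_(m + k).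
have -> : (Lop N a P)`_m = \sum_(0 <= i < N.+1) \sum_(0 <= k < N.+1 | (k <= i)%N) T i k.
  rewrite /Lop coef_sum [RHS]big_ltn // [X in _ = X + _]big1 ?add0r => [|k _].
    apply: eq_big_nat => i /andP[_ ltiN].
    by rewrite coef_mul_derivn // (big_nat_widen _ _ _ _ _ ltiN).
  by rewrite /T a0 coef0 mulr0 mul0r.
rewrite (exchange_big_dep_nat predT) //=; apply: eq_big_nat => k /andP[_ ltkN].
have -> : \sum_(0 <= i < N.+1 | (k <= i)%N) T i k = \sum_(k <= i < N.+1) T i k.
  by rewrite (big_nat_widenl k 0).
rewrite -mulr_suml /delta; congr (_ * _).
rewrite -(@sum_nat_widen0 _ k N.+1 (N + m + k).+1); first last.
- by move=> i /andP[ltNi _]; rewrite a_gtN ?coef0 ?mulr0.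
- lia.
rewrite (@sum_nat_widen0 _ k (m + k).+1) //; first lia.
by move=> i /andP[ltmki _]; rewrite bin_small ?mul0r.
Qed.

Lemma coef_Lop_top (P : {poly C}) (m : nat) : (size P <= m.+1)%N ->
  (Lop N a P)`_m = delta a m 0 * P`_m.
Proof.
move=> szP; rewrite coef_Lop big_ltn // addn0 big_nat_cond big1 ?addr0 //.
move=> k /andP[/andP[k_gt0 _] _]; rewrite nth_default ?mulr0 //.
by apply: leq_trans szP _; rewrite -addn1 leq_add2l.
Qed.

Lemma Lop_eigenP (n : nat) (lam : C) (P : {poly C}) : (size P <= n.+1)%N ->
  Lop N a P = lam *: P <->
  (forall m, (m <= n)%N ->
     \sum_(0 <= k < N.+1) delta a (m + k) k * P`_(m + k) = lam * P`_m).
Proof.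
move=> szP; split=> [LP m _ | eigen_coef]; first by rewrite -coef_Lop LP coefZ.
apply/polyP => m; rewrite coefZ; have [/eigen_coef <-|ltnm] := leqP m n.
  exact: coef_Lop.
have szPm : (size P <= m)%N by exact: leq_trans ltnm.
by rewrite coef_Lop_top ?(leq_trans szPm) // nth_default ?mulr0.
Qed.

Lemma eigenvalue_delta (lam : C) (P : {poly C}) : GRing.lreg (lead_coef P) ->
  Lop N a P = lam *: P -> lam = delta a (size P).-1 0.
Proof.
move=> reg_lc LP; apply: reg_lc; rewrite mulrC [RHS]mulrC lead_coefE.
by rewrite -coefZ -LP coef_Lop_top // leqSpred.
Qed.

Lemma LopB (P Q : {poly C}) : Lop N a (P - Q) = Lop N a P - Lop N a Q.
Proof. by rewrite /Lop -sumrB; apply: eq_bigr => i _; rewrite derivnB mulrBr. Qed.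

Lemma Mtrunc_coefvec (n : nat) (P : {poly C}) : (size P <= n.+1)%N ->
  Mtrunc N a n *m coefvec n P = coefvec n (Lop N a P).
Proof.
move=> szP; apply/matrixP => r j; rewrite ord1 !mxE coef_Lop.
pose F c := delta a c (c - r) * P`_c.
(* The band condition c - r <= N of Mtrunc is automatic: see delta_eq0. *)
transitivity (\sum_(r <= c < n.+1) F c).
  rewrite (big_nat_widenl r 0) // big_mkcond big_mkord; apply: eq_bigr => c _.
  rewrite !mxE /F; case: (r <= c)%N => /=; last by rewrite mul0r.
  by case: leqP => // /delta_eq0 ->; rewrite mul0r.
rewrite (big_addn 0 _ r).
rewrite -(@sum_nat_widen0 _ 0 (n.+1 - r) (n.+1 + N)); last 2 first.
- lia.
- move=> k /andP[ltk _]; rewrite /F nth_default ?mulr0 //.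
  by apply: leq_trans szP _; lia.
rewrite (@sum_nat_widen0 _ 0 N.+1); last 2 first.
- lia.
- by move=> k /andP[ltNk _]; rewrite /F addnK delta_eq0 ?mul0r.
by apply: eq_big_nat => k _; rewrite /F addnK addnC.
Qed.

End LopCoefficients.

Section Eigenpolynomials.

Variables (F : idomainType) (N : nat) (a : nat -> {poly F}).
Hypothesis size_a : forall i, (size (a i) <= i.+1)%N.
Hypothesis a0 : a 0%N = 0.
Hypothesis a_gtN : forall i, (N < i)%N -> a i = 0.

Lemma monic_eigenpoly_unique (n : nat) (lam : F) (P Q : {poly F}) :
  (forall d, (d < n)%N -> lam != delta a d 0) ->
  P \is monic -> size P = n.+1 -> Lop N a P = lam *: P ->
  Q \is monic -> size Q = n.+1 -> Lop N a Q = lam *: Q -> Q = P.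
Proof.
move=> lam_new Pm szP LP Qm szQ LQ; apply/eqP; rewrite -subr_eq0.
apply: contraT => D_neq0; set D := Q - P in D_neq0.
have LD : Lop N a D = lam *: D by rewrite LopB LQ LP scalerBr.
have szD : (size D <= n)%N by rewrite -ltnS -szQ size_monicB // szQ szP.
have /lam_new/negP[] : ((size D).-1 < n)%N.
  by rewrite -ltnS prednK ?size_poly_gt0.
by apply/eqP/(eigenvalue_delta size_a a0 a_gtN _ LD)/lregP; rewrite lead_coef_eq0.
Qed.

End Eigenpolynomials.

Theorem theorem1 (R : realType) (N : nat) (a : nat -> {poly R[i]}) :
  (1 <= N)%N ->
  (forall i, (size (a i) <= i.+1)%N) ->
  a 0%N = 0 ->
  (forall i, (N < i)%N -> a i = 0) ->
  (* Part 1 *)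
  (forall (n : nat) (lam : R[i]) (P : {poly R[i]}),
      P \is monic -> size P = n.+1 ->
      (Lop N a P = lam *: P <->
       (forall m, (m <= n)%N ->
          \sum_(0 <= k < N.+1) delta a (m + k) k * P`_(m + k) = lam * P`_m)))
  /\
  (* Part 2 *)
  (forall (lam : nat -> R[i]) (P : nat -> {poly R[i]}),
      lam 0%N = 0 ->
      (forall n, P n \is monic /\ size (P n) = n.+1 /\
                 Lop N a (P n) = lam n *: P n) ->
      (forall n, (1 <= n)%N ->
         lam n != 0 /\ (forall j, (1 <= j < n)%N -> lam n != lam j)) ->
      forall n, (1 <= n)%N ->
        (forall Q : {poly R[i]}, Q \is monic -> size Q = n.+1 ->
           Lop N a Q = lam n *: Q -> Q = P n)
        /\ (Mtrunc N a n - (lam n)%:M) *m coefvec n (P n) = 0).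
Proof.
move=> _ size_a a0 a_gtN.
split=> [n lam P _ szP | lam P lam0 eigenP lam_new n n_gt0].
  by apply: (Lop_eigenP size_a a0 a_gtN); rewrite szP.
have lam_delta d : lam d = delta a d 0.
  have [/monicP lcP [szP LP]] := eigenP d.
  have reg_lc : GRing.lreg (lead_coef (P d)) by rewrite lcP; exact: lreg1.
  by rewrite (eigenvalue_delta size_a a0 a_gtN reg_lc LP) szP.
have [Pm [szP LP]] := eigenP n.
split=> [Q Qm szQ LQ | ].
  apply: (monic_eigenpoly_unique size_a a0 a_gtN _ Pm szP LP Qm szQ LQ).
  have [lam_n0 lam_n_new] := lam_new n n_gt0.
  by case=> [|d] ltdn; rewrite -lam_delta ?lam0 // lam_n_new.
rewrite mulmxBl Mtrunc_coefvec ?szP // LP mul_scalar_mx.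
by apply/matrixP => i j; rewrite !mxE coefZ subrr.
Qed.
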